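(* Let $x^*\in\mathbb{R}^n$ satisfy $Ax^*=b$, let $\ell\ge1$ and let $x_1,\ldots,x_\ell\in\mathbb{R}^n$ be affinely independent points such that \[x_\ell=\operatorname{argmin}_{\xi\in\operatorname{aff}(x_1,\ldots,x_\ell)}\|\xi-x^*\|^2\] and $P(x_\ell)\notin\operatorname{aff}(x_1,\ldots,x_\ell)$. Let \[V=(x_1-x_\ell,\ldots,x_{\ell-1}-x_\ell)\in\mathbb{R}^{n\times(\ell-1)},\quad M=(V,\,P(x_\ell)-x_\ell)\in\mathbb{R}^{n\times\ell},\quad \gamma=\tfrac12\big(\|r(x_\ell)\|^2+\|P(x_\ell)-x_\ell\|^2\big).\] Then the minimizer $s^*=\operatorname{argmin}_{s\in\mathbb{R}^\ell}\|x_\ell+Ms-x^*\|^2$ exists, is unique, and is the unique solution of the linear system $M^TMs=\gamma e_\ell$, where $e_\ell\in\mathbb{R}^\ell$ is the $\ell$-th unit vector. Moreover, \[\|x_\ell-x^*\|^2-\|x_\ell+Ms^*-x^*\|^2=\gamma s^*_\ell=\gamma^2\frac{\det(V^TV)}{\det(M^TM)}.\]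
   Context: Let $A=(a_1,\ldots,a_m)^T\in\mathbb{R}^{m\times n}$ with rows $a_j\in\mathbb{R}^n\setminus\{0\}$, and let $b\in\mathbb{R}^m$ lie in the range of $A$. Norms are Euclidean. For $j=1,\ldots,m$ define the projectors $P_j:\mathbb{R}^n\to\mathbb{R}^n$, $P_j(x)=\big(I-\frac{a_ja_j^T}{\|a_j\|^2}\big)x+\frac{b_j}{\|a_j\|^2}a_j$ (the orthogonal projection onto $\{z:a_j^Tz=b_j\}$), and the Kaczmarz cycle $P=P_m\circ\cdots\circ P_1$. The residual $r:\mathbb{R}^n\to\mathbb{R}^m$ is defined by $r_1(x)=(a_1^Tx-b_1)/\|a_1\|$ and $r_j(x)=(a_j^T(P_{j-1}\circ\cdots\circ P_1)(x)-b_j)/\|a_j\|$ for $j=2,\ldots,m$. $\operatorname{aff}(\cdot)$ denotes the affine hull. When $\ell=1$, $V$ is the empty matrix and $\det(V^TV)$ is taken to be $1$. *)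

From HB Require Import structures.
From mathcomp Require Import all_boot all_order all_algebra.
Set Implicit Arguments. Unset Strict Implicit. Unset Printing Implicit Defensive.
Import Order.TTheory GRing.Theory Num.Theory.
Local Open Scope ring_scope.

Section KaczmarzDefs.
Variables (R : rcfType) (m n : nat) (A : 'M[R]_(m, n)) (b : 'cV[R]_m).

Definition sqnorm p (u : 'cV[R]_p) : R := \sum_(i < p) u i 0 ^+ 2.

Definition rowsq (j : 'I_m) : R := \sum_(i < n) A j i ^+ 2.

Definition kacz_proj (j : 'I_m) (x : 'cV[R]_n) : 'cV[R]_n :=
  x - (((row j A *m x) 0 0 - b j 0) / rowsq j) *: (row j A)^T.

(* kacz_partial k = P_k o ... o P_1  (1-indexed), i.e. the first k projections *)
Fixpoint kacz_partial (k : nat) (x : 'cV[R]_n) : 'cV[R]_n :=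
  match k with
  | 0 => x
  | k'.+1 =>
      match (insub k' : option 'I_m) with
      | Some j => kacz_proj j (kacz_partial k' x)
      | None => kacz_partial k' x
      end
  end.

Definition kacz_cycle (x : 'cV[R]_n) : 'cV[R]_n := kacz_partial m x.

Definition kacz_residual (x : 'cV[R]_n) : 'cV[R]_m :=
  \col_(j < m) (((row j A *m kacz_partial j x) 0 0 - b j 0) / Num.sqrt (rowsq j)).

End KaczmarzDefs.

Definition aff_hull (R : rcfType) (n l : nat) (x : 'I_l -> 'cV[R]_n) (z : 'cV[R]_n) : Prop :=
  exists c : 'I_l -> R, \sum_(i < l) c i = 1 /\ z = \sum_(i < l) c i *: x i.

Definition aff_indep (R : rcfType) (n l : nat) (x : 'I_l -> 'cV[R]_n) : Prop :=
  forall c : 'I_l -> R, \sum_(i < l) c i = 0 -> \sum_(i < l) c i *: x i = 0 ->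
    forall i, c i = 0.

Definition is_argmin (T : Type) (R : rcfType) (S : T -> Prop) (f : T -> R) (z : T) : Prop :=
  S z /\ forall y, S y -> f z <= f y.

From HB Require Import structures.
From mathcomp Require Import all_boot all_order all_algebra.
From mathcomp Require Import ring lra.
Import Order.TTheory GRing.Theory Num.Theory.
Local Open Scope ring_scope.
Set Implicit Arguments. Unset Strict Implicit. Unset Printing Implicit Defensive.

(* The Kaczmarz cycle composes orthogonal projections onto hyperplanes
   through x*, so by Pythagoras it decreases the squared distance to x* by
   exactly ||r(x)||^2.  Writing w = x_l - x* and expanding ||P(x_l) - x*||^2
   around x_l, this says <P(x_l) - x_l, w> = -gamma, while minimality of x_l
   on the affine hull makes w orthogonal to every x_j - x_l.  Hence
   M^T w = -gamma e_l, so the normal equations of min_s ||w + M s||^2 read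
   M^T M s = gamma e_l.  The columns of M are independent (affine independence
   and P(x_l) outside the hull), so M^T M is invertible; the decrease equals
   -<s*, M^T w> = gamma s*_l, and by Cramer's rule
   s*_l = gamma det(V^T V) / det(M^T M), V^T V being the minor of M^T M
   obtained by deleting its last row and column. *)

Section InnerProduct.
Variable R : rcfType.

Definition dot p (u v : 'cV[R]_p) : R := \sum_(i < p) u i 0 * v i 0.

Lemma sqnormE p (u : 'cV[R]_p) : sqnorm u = dot u u.
Proof. by apply: eq_bigr => i _; rewrite expr2. Qed.

Lemma dotC p (u v : 'cV[R]_p) : dot u v = dot v u.
Proof. by apply: eq_bigr => i _; rewrite mulrC. Qed.

Lemma dotDl p (u v w : 'cV[R]_p) : dot (u + v) w = dot u w + dot v w.
Proof. by rewrite /dot -big_split; apply: eq_bigr => i _; rewrite mxE mulrDl. Qed.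

Lemma dotZl p a (u w : 'cV[R]_p) : dot (a *: u) w = a * dot u w.
Proof. by rewrite /dot mulr_sumr; apply: eq_bigr => i _; rewrite mxE mulrA. Qed.

Lemma dotNl p (u w : 'cV[R]_p) : dot (- u) w = - dot u w.
Proof. by rewrite -scaleN1r dotZl mulN1r. Qed.

Lemma dotBl p (u v w : 'cV[R]_p) : dot (u - v) w = dot u w - dot v w.
Proof. by rewrite dotDl dotNl. Qed.

Lemma dotDr p (u v w : 'cV[R]_p) : dot w (u + v) = dot w u + dot w v.
Proof. by rewrite !(dotC w) dotDl. Qed.

Lemma dotZr p a (u w : 'cV[R]_p) : dot w (a *: u) = a * dot w u.
Proof. by rewrite !(dotC w) dotZl. Qed.

Lemma dotNr p (u w : 'cV[R]_p) : dot w (- u) = - dot w u.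
Proof. by rewrite !(dotC w) dotNl. Qed.

Lemma dot0r p (w : 'cV[R]_p) : dot w 0 = 0.
Proof. by rewrite /dot big1 // => i _; rewrite mxE mulr0. Qed.

Lemma dot_delta_mx p (s : 'cV[R]_p) i : dot s (delta_mx i 0) = s i 0.
Proof.
rewrite /dot (bigD1 i) //= big1 ?addr0; first by rewrite mxE !eqxx mulr1.
by move=> j /negbTE ji; rewrite mxE ji mulr0.
Qed.

Lemma dot_mulmxl p q (M : 'M[R]_(p, q)) s v : dot (M *m s) v = dot s (M^T *m v).
Proof.
rewrite /dot; under eq_bigr do rewrite mxE mulr_suml.
rewrite exchange_big /=; apply: eq_bigr => j _.
rewrite mxE mulr_sumr; apply: eq_bigr => i _; rewrite mxE; ring.
Qed.

Lemma sqnorm_ge0 p (u : 'cV[R]_p) : 0 <= sqnorm u.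
Proof. by apply: sumr_ge0 => i _; rewrite sqr_ge0. Qed.

Lemma sqnorm_eq0 p (u : 'cV[R]_p) : sqnorm u = 0 -> u = 0.
Proof.
move=> /psumr_eq0P u0; apply/matrixP => i j; rewrite (ord1 j) mxE.
by apply/eqP; rewrite -sqrf_eq0 u0 // => k _; rewrite sqr_ge0.
Qed.

Lemma sqnormD p (u v : 'cV[R]_p) :
  sqnorm (u + v) = sqnorm u + 2 * dot u v + sqnorm v.
Proof. by rewrite !sqnormE !dotDl !dotDr (dotC v u); ring. Qed.

Lemma sqnormB p (u v : 'cV[R]_p) :
  sqnorm (u - v) = sqnorm u - 2 * dot u v + sqnorm v.
Proof. by rewrite sqnormD dotNr (sqnormE (- v)) dotNl dotNr opprK -sqnormE; ring. Qed.

End InnerProduct.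

Section KaczmarzDecrease.
Variables (R : rcfType) (m n : nat) (A : 'M[R]_(m, n)) (b : 'cV[R]_m).
Variable xs : 'cV[R]_n.
Hypothesis Axs : A *m xs = b.

Lemma sqnorm_kacz_proj_sub (j : 'I_m) y :
  sqnorm (y - xs) - sqnorm (kacz_proj A b j y - xs) =
  ((row j A *m y) 0 0 - b j 0) ^+ 2 / rowsq A j.
Proof.
rewrite /kacz_proj; set a := (row j A)^T; set d := _ - b j 0.
have dot_a z : dot z a = (row j A *m z) 0 0.
  by rewrite /dot mxE; apply: eq_bigr => i _; rewrite !mxE mulrC.
have dot_a_sub : dot (y - xs) a = d.
  by rewrite /d dotBl !dot_a -[row j A *m xs]row_mul Axs !mxE.
have sqnorm_a : sqnorm a = rowsq A j by apply: eq_bigr => i _; rewrite !mxE.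
rewrite [y - _ - xs]addrAC [sqnorm (y - xs - _)]sqnormB dotZr dot_a_sub.
rewrite (sqnormE (_ *: a)) dotZl dotZr -sqnormE sqnorm_a.
(* a zero row makes both sides vanish, since x / 0 = 0 *)
have [->|a0] := eqVneq (rowsq A j) 0; first by rewrite !invr0 !mulr0; ring.
by field.
Qed.

Lemma kacz_partial_sqnorm_sub k x :
  sqnorm (x - xs) - sqnorm (kacz_partial A b k x - xs) =
  \sum_(i < k) oapp (fun j : 'I_m => ((row j A *m kacz_partial A b i x) 0 0 - b j 0) ^+ 2
                                      / rowsq A j) 0 (insub (i : nat)).
Proof.
elim: k => [|k IH]; first by rewrite big_ord0 /= subrr.
rewrite big_ord_recr /= -IH; case: insub => [j|] /=; last by rewrite addr0.
by rewrite -sqnorm_kacz_proj_sub; ring.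
Qed.

Lemma kacz_cycle_sqnorm_sub x :
  sqnorm (x - xs) - sqnorm (kacz_cycle A b x - xs) = sqnorm (kacz_residual A b x).
Proof.
rewrite /kacz_cycle kacz_partial_sqnorm_sub; apply: eq_bigr => i _.
rewrite mxE valK /= exprMn exprVn sqr_sqrtr //.
by apply: sumr_ge0 => k _; rewrite sqr_ge0.
Qed.

Lemma dot_kacz_cycle_sub x :
  dot (kacz_cycle A b x - x) (x - xs) =
  - ((sqnorm (kacz_residual A b x) + sqnorm (kacz_cycle A b x - x)) / 2).
Proof.
have := kacz_cycle_sqnorm_sub x.
have -> : kacz_cycle A b x - xs = (kacz_cycle A b x - x) + (x - xs).
  by rewrite addrA subrK.
by rewrite sqnormD => <-; field.
Qed.

End KaczmarzDecrease.

Section KroneckerSums.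
Variables (T : pzRingType) (V : lmodType T) (p : nat).

Lemma sum_delta_mull (i : 'I_p) (F : 'I_p -> T) : \sum_j (j == i)%:R * F j = F i.
Proof. by rewrite (bigD1 i) //= eqxx mul1r big1 ?addr0 // => j /negbTE ->; rewrite mul0r. Qed.

Lemma sum_delta_scale (i : 'I_p) (F : 'I_p -> V) : \sum_j (j == i)%:R *: F j = F i.
Proof. by rewrite (bigD1 i) //= eqxx scale1r big1 ?addr0 // => j /negbTE ->; rewrite scale0r. Qed.

End KroneckerSums.

Section AffineHull.
Variables (R : rcfType) (n k : nat) (x : 'I_k.+1 -> 'cV[R]_n).
Local Notation xl := (x ord_max).

Lemma sum_scale_sub (d : 'I_k.+1 -> R) :
  \sum_j d j *: (x j - xl) = \sum_j d j *: x j - (\sum_j d j) *: xl.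
Proof. by under eq_bigr do rewrite scalerBr; rewrite sumrB scaler_suml. Qed.

Lemma aff_hull_add_sum (d : 'I_k.+1 -> R) :
  aff_hull x (xl + \sum_j d j *: (x j - xl)).
Proof.
exists (fun j => d j + (j == ord_max)%:R * (1 - \sum_j d j)); split.
  by rewrite big_split /= sum_delta_mull addrC subrK.
rewrite sum_scale_sub; under [RHS]eq_bigr do rewrite scalerDl mulrC -scalerA.
by rewrite big_split /= -scaler_sumr sum_delta_scale scalerBl scale1r addrCA.
Qed.

Lemma aff_indep_sum_sub (d : 'I_k.+1 -> R) :
  aff_indep x -> \sum_j d j *: (x j - xl) = 0 -> forall j, j != ord_max -> d j = 0.
Proof.
move=> indep d0 j jl.
pose c i := d i - (i == ord_max)%:R * \sum_i d i.
have c_sum : \sum_i c i = 0 by rewrite sumrB sum_delta_mull subrr.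
have c_vec : \sum_i c i *: x i = 0.
  under eq_bigr do rewrite scalerBl mulrC -scalerA.
  by rewrite sumrB -scaler_sumr sum_delta_scale -sum_scale_sub.
by have := indep c c_sum c_vec j; rewrite /c (negbTE jl) mul0r subr0.
Qed.

Lemma aff_hull_argmin_orth xs :
  is_argmin (aff_hull x) (fun xi => sqnorm (xi - xs)) xl ->
  forall i, dot (x i - xl) (xl - xs) = 0.
Proof.
move=> [_ xl_min] i.
pose c := dot (x i - xl) (xl - xs); pose q := sqnorm (x i - xl).
(* moving along the line through x_l and x_i by t changes the objective by
   2 t c + t^2 q >= 0; the choice t = -c / (q + 1) forces c = 0 *)
pose t := - c / (q + 1).
have q0 : 0 <= q := sqnorm_ge0 _.
have : sqnorm (xl - xs) <= sqnorm (xl + t *: (x i - xl) - xs).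
  apply: xl_min; have := aff_hull_add_sum (fun j => (j == i)%:R * t).
  by under eq_bigr do rewrite mulrC -scalerA; rewrite -scaler_sumr sum_delta_scale.
rewrite addrAC [sqnorm (_ + t *: _)]sqnormD dotZr (dotC (xl - xs)).
rewrite (sqnormE (t *: _)) dotZl dotZr -sqnormE.
rewrite -/c -/q -addrA lerDl => quad_ge0.
have q1 : q + 1 != 0 by rewrite lt0r_neq0 // ltr_wpDl.
have : 0 <= (q + 1) ^+ 2 * (2 * (t * c) + t * (t * q)) by rewrite mulr_ge0 ?sqr_ge0.
have -> : (q + 1) ^+ 2 * (2 * (t * c) + t * (t * q)) = - (c ^+ 2 * (q + 2)).
  by rewrite /t; field.
by nra.
Qed.

End AffineHull.

Section ColumnMatrices.
Variable R : rcfType.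

Definition mx_of_cols n p (c : 'I_p -> 'cV[R]_n) : 'M[R]_(n, p) := \matrix_(i, j) c j i 0.

Lemma mx_of_cols_mul n p (c : 'I_p -> 'cV[R]_n) s :
  mx_of_cols c *m s = \sum_j s j 0 *: c j.
Proof.
apply/matrixP => i z; rewrite (ord1 z) !mxE summxE.
by apply: eq_bigr => j _; rewrite !mxE mulrC.
Qed.

Lemma tr_mx_of_cols_mul n p (c : 'I_p -> 'cV[R]_n) w :
  (mx_of_cols c)^T *m w = \col_j dot (c j) w.
Proof.
apply/matrixP => j z; rewrite (ord1 z) !mxE.
by apply: eq_bigr => i _; rewrite !mxE.
Qed.

Lemma row'_col'_gram n p (M : 'M[R]_(n, p.+1)) i :
  row' i (col' i (M^T *m M)) = (col' i M)^T *m col' i M.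
Proof. by apply/matrixP => a c; rewrite !mxE; apply: eq_bigr => r _; rewrite !mxE. Qed.

Lemma invmx_diag p (B : 'M[R]_p.+1) i :
  B \in unitmx -> invmx B i i = \det (row' i (col' i B)) / \det B.
Proof.
move=> Bunit; rewrite /invmx Bunit !mxE /cofactor mulrC.
by rewrite -signr_odd addnn odd_double expr0 mul1r.
Qed.

End ColumnMatrices.

Section LeastSquares.
Variables (R : rcfType) (n p : nat) (M : 'M[R]_(n, p)).

Lemma gram_unitmx : (forall s : 'cV_p, M *m s = 0 -> s = 0) -> M^T *m M \in unitmx.
Proof.
move=> Minj; rewrite unitmxE unitfE; apply/negP => /det0P [v v0 vMM].
have Mv : M *m v^T = 0.
  apply: sqnorm_eq0; rewrite sqnormE dot_mulmxl mulmxA.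
  by move: (congr1 trmx vMM); rewrite trmx0 !trmx_mul trmxK => ->; rewrite dot0r.
by move/eqP: v0; apply; rewrite -[v]trmxK (Minj _ Mv) trmx0.
Qed.

Variables (w : 'cV[R]_n) (s0 : 'cV[R]_p).
Hypothesis normal_s0 : M^T *m (w + M *m s0) = 0.

Lemma sqnorm_normal_split s :
  sqnorm (w + M *m s) = sqnorm (w + M *m s0) + sqnorm (M *m (s - s0)).
Proof.
have -> : w + M *m s = (w + M *m s0) + M *m (s - s0).
  by rewrite mulmxBr -addrA [M *m s0 + _]addrC subrK.
by rewrite sqnormD (dotC (w + _)) dot_mulmxl normal_s0 dot0r mulr0 addr0.
Qed.

Lemma sqnorm_normal_decrease :
  sqnorm w - sqnorm (w + M *m s0) = - dot s0 (M^T *m w).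
Proof.
have : dot (M *m s0) (w + M *m s0) = 0 by rewrite dot_mulmxl normal_s0 dot0r.
rewrite dotDr -sqnormE dot_mulmxl sqnormD (dotC w) dot_mulmxl => orth.
by lra.
Qed.

End LeastSquares.

Section StepColumns.
Variables (R : rcfType) (n k : nat) (x : 'I_k.+1 -> 'cV[R]_n) (y : 'cV[R]_n).
Local Notation xl := (x ord_max).

Definition step_cols (j : 'I_k.+1) : 'cV[R]_n :=
  if j == ord_max then y - xl else x j - xl.

Local Notation M := (mx_of_cols step_cols).

Lemma step_cols_mul (s : 'cV_k.+1) :
  M *m s = s ord_max 0 *: (y - xl) + \sum_j s j 0 *: (x j - xl).
Proof.
rewrite mx_of_cols_mul (bigD1 ord_max) //= [in RHS](bigD1 ord_max) //=.
rewrite /step_cols eqxx subrr scaler0 add0r; congr (_ + _).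
by apply: eq_bigr => j /negbTE ->.
Qed.

Lemma step_cols_mul_inj :
  aff_indep x -> ~ aff_hull x y -> forall s : 'cV_k.+1, M *m s = 0 -> s = 0.
Proof.
move=> indep y_out s; rewrite step_cols_mul => Ms0.
have sl0 : s ord_max 0 = 0.
  apply/eqP/negPn/negP => sl_neq0; apply: y_out.
  have sum_eq : \sum_j s j 0 *: (x j - xl) = - (s ord_max 0 *: (y - xl)).
    by apply/eqP; rewrite -addr_eq0 addrC Ms0.
  have -> : y = xl + \sum_j (- s j 0 / s ord_max 0) *: (x j - xl).
    under eq_bigr do rewrite mulrC -scalerA.
    rewrite -scaler_sumr; under eq_bigr do rewrite scaleNr.
    by rewrite sumrN sum_eq opprK scalerA mulVf // scale1r addrC subrK.
  exact: aff_hull_add_sum.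
move: Ms0; rewrite sl0 scale0r add0r => Ms0.
apply/matrixP => j z; rewrite (ord1 z) mxE.
by have [->|jl] := eqVneq j ord_max; last exact: aff_indep_sum_sub Ms0 j jl.
Qed.

Lemma tr_step_cols_mul (w : 'cV_n) :
  (forall i, dot (x i - xl) w = 0) -> M^T *m w = dot (y - xl) w *: delta_mx ord_max 0.
Proof.
move=> orth; rewrite tr_mx_of_cols_mul; apply/matrixP => j z.
rewrite (ord1 z) !mxE /step_cols eqxx andbT.
by case: eqVneq => _; rewrite ?mulr1 ?orth ?mulr0.
Qed.

Lemma col'_step_cols :
  col' ord_max M = mx_of_cols (fun j : 'I_k => x (widen_ord (leqnSn k) j) - xl).
Proof.
apply/matrixP => i j; rewrite !mxE /step_cols eq_sym (negbTE (neq_lift ord_max j)).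
by rewrite !mxE; congr (x _ i 0 - _); apply: val_inj; exact: lift_max.
Qed.

End StepColumns.

Theorem theorem7 (R : rcfType) (m n k : nat) (A : 'M[R]_(m, n)) (b : 'cV[R]_m)
    (xstar : 'cV[R]_n) (x : 'I_k.+1 -> 'cV[R]_n) :
  (forall j : 'I_m, row j A != 0) ->
  (exists y : 'cV[R]_n, A *m y = b) ->
  A *m xstar = b ->
  aff_indep x ->
  is_argmin (aff_hull x) (fun xi => sqnorm (xi - xstar)) (x ord_max) ->
  ~ aff_hull x (kacz_cycle A b (x ord_max)) ->
  let xl := x ord_max in
  let V : 'M[R]_(n, k) :=
    \matrix_(i < n, j < k) (x (widen_ord (leqnSn k) j) - xl) i 0 in
  let M : 'M[R]_(n, k.+1) :=
    \matrix_(i < n, j < k.+1)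
      (if j == ord_max then (kacz_cycle A b xl - xl) i 0 else (x j - xl) i 0) in
  let gamma : R :=
    (sqnorm (kacz_residual A b xl) + sqnorm (kacz_cycle A b xl - xl)) / 2 in
  let e : 'cV[R]_k.+1 := delta_mx ord_max 0 in
  let f := fun s : 'cV[R]_k.+1 => sqnorm (xl + M *m s - xstar) in
  exists sstar : 'cV[R]_k.+1,
    [/\ is_argmin (fun _ => True) f sstar,
        (forall s, is_argmin (fun _ => True) f s -> s = sstar),
        M^T *m M *m sstar = gamma *: e,
        (forall s, M^T *m M *m s = gamma *: e -> s = sstar) &
        (sqnorm (xl - xstar) - f sstar = gamma * sstar ord_max 0 /\
         gamma * sstar ord_max 0 = gamma ^+ 2 * (\det (V^T *m V) / \det (M^T *m M)))].
Proof.
move=> _ _ Axs indep xl_min Pxl_out xl V M gamma e f.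
set w := xl - xstar.
have EM : M = mx_of_cols (step_cols x (kacz_cycle A b xl)).
  by apply/matrixP => i j; rewrite !mxE /step_cols; case: ifP; rewrite !mxE.
have EV : V = col' ord_max M.
  by rewrite EM col'_step_cols; apply/matrixP => i j; rewrite !mxE.
have Minj : forall s : 'cV_k.+1, M *m s = 0 -> s = 0.
  by rewrite EM; exact: step_cols_mul_inj.
have Mw : M^T *m w = - gamma *: e.
  rewrite EM tr_step_cols_mul; last exact: aff_hull_argmin_orth.
  by rewrite dot_kacz_cycle_sub // scaleNr.
have gram_unit := gram_unitmx Minj.
pose sstar := invmx (M^T *m M) *m (gamma *: e).
have gram_sstar : M^T *m M *m sstar = gamma *: e by rewrite mulKVmx.
have normal_sstar : M^T *m (w + M *m sstar) = 0.
  by rewrite mulmxDr mulmxA gram_sstar Mw scaleNr addNr.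
have fE s : f s = sqnorm (w + M *m s) by rewrite /f addrAC.
exists sstar; split.
- by split=> // s _; rewrite !fE (sqnorm_normal_split normal_sstar s) lerDl sqnorm_ge0.
- move=> s [_ /(_ sstar I)]; rewrite !fE (sqnorm_normal_split normal_sstar s) gerDl.
  move=> le0; have /sqnorm_eq0/Minj/subr0_eq// : sqnorm (M *m (s - sstar)) = 0.
  by apply/le_anti; rewrite le0 sqnorm_ge0.
- exact: gram_sstar.
- by move=> s gram_s; rewrite /sstar -gram_s mulKmx.
split.
  by rewrite fE sqnorm_normal_decrease // Mw dotZr dot_delta_mx mulNr opprK.
rewrite /sstar -scalemxAr /e -colE !mxE invmx_diag // row'_col'_gram -EV.
by rewrite mulrA -expr2.
Qed.
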